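(* Let $\mathcal{M}=(M_i\colon i\in K)$ be a family of matroids on a common ground set $E$, let $\mathcal{F}=(\langle I_i,S_i\rangle\colon i\in K)$ be feasible with respect to $\mathcal{M}$, let $X$ be $\mathcal{M}(\mathcal{F})$-tight, and let $(R_i\colon i\in K)$ be a covering of $\mathcal{M}(\mathcal{F})\restriction X$. Then $\mathcal{F}'=(\langle I_i\cup R_i,S_i\rangle\colon i\in K)$ is a feasible extension of $\mathcal{F}$ with respect to $\mathcal{M}$, and $I_i\cup R_i$ spans $X\cap S_i$ in $M_i$ for every $i\in K$. Furthermore, if $X$ is the $\subseteq$-largest $\mathcal{M}(\mathcal{F})$-tight set, then there is no non-empty $\mathcal{M}(\mathcal{F}')$-tight set.
   Context: Matroids are possibly infinite (independence axioms: $\emptyset$ independent, closure under subsets, augmentation relative to maximal independent sets, and every independent subset of any $X\subseteq E$ extends to a maximal independent subset of $X$). Circuits are minimal dependent sets; $X$ spans $e$ if $e\in X$ or some circuit $C\ni e$ has $C\setminus\{e\}\subseteq X$; a set is spanning if it spans the whole ground set. Minors: $M\restriction X=(X,\mathcal{I}\cap\mathcal{P}(X))$, $M\setminus X=M\restriction(E\setminus X)$, $M^*$ is the matroid whose bases are the complements of bases of $M$, and $M/X=(M^*\setminus X)^*$. Declaring the elements of $X$ to be loops gives $M\setminus X\oplus(X,\{\emptyset\})$. For a family $(N_i\colon i\in K)$ on a set $Y$: a covering is $(R_i)$ with $R_i$ independent in $N_i$ and $\bigcup R_i=Y$; a packing is $(P_i)$ pairwise disjoint with $P_i$ spanning in $N_i$;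 the family is tight if it admits a covering and every covering has each $R_i$ spanning in $N_i$; $X\subseteq Y$ is tight (w.r.t. the family) if $(N_i\restriction X)$ is tight. Consider families $\mathcal{F}=(\langle I_i,S_i\rangle\colon i\in K)$ with $I_i\subseteq S_i\subseteq E$, $I_i$ independent and $S_i$ spanning in $M_i$, $I_i\cap I_j=\emptyset$ for $i\neq j$, and $\bigcup_i S_i=E$. $\mathcal{F}$ is covering-feasible if there is a covering $(R_i)$ of $\mathcal{M}$ with $I_i\subseteq R_i\subseteq S_i$, packing-feasible if there is a packing $(P_i)$ of $\mathcal{M}$ with $I_i\subseteq P_i\subseteq S_i$, and feasible if both. $\mathcal{F}'=(\langle I_i',S_i'\rangle)$ is an extension of $\mathcal{F}$ if $I_i\subseteq I_i'\subseteq S_i'\subseteq S_i$ for all $i$. $\mathcal{M}(\mathcal{F})=(M_i(\mathcal{F})\colon i\in K)$, where $M_i(\mathcal{F})$ is the matroid on $E\setminus\bigcup_{j\in K}I_j$ obtained from $M_i$ by contracting $I_i$, deleting $\bigcup_{j\neq i}I_j$, and declaring the remaining elements not in $S_i$ to be loops. *)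

From mathcomp Require Import all_boot.
From mathcomp Require Import boolp classical_sets.
Set Implicit Arguments. Unset Strict Implicit. Unset Printing Implicit Defensive.
Local Open Scope classical_set_scope.

Record matroid (T : Type) := Matroid {
  mground : set T;
  mindep  : set (set T) }.

Section Matroids.
Variable T : Type.
Implicit Types (M : matroid T) (X Y I J B C : set T).

Definition maxindep_in M X B :=
  [/\ B `<=` X, mindep M B &
      forall B', mindep M B' -> B `<=` B' -> B' `<=` X -> B' = B].

Definition is_base M B := maxindep_in M (mground M) B.

Definition is_matroid M :=
  [/\ (forall I, mindep M I -> I `<=` mground M),
      mindep M set0,
      (forall I J, mindep M J -> I `<=` J -> mindep M I),
      (forall I B, mindep M I -> ~ is_base M I -> is_base M B ->
         exists2 x, x \in B `\` I & mindep M (x |` I)) &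
      (forall X I, X `<=` mground M -> mindep M I -> I `<=` X ->
         exists B, I `<=` B /\ maxindep_in M X B)].

Definition is_circuit M C :=
  [/\ C `<=` mground M, ~ mindep M C &
      forall D, D `<=` C -> D <> C -> mindep M D].

Definition spans M X (e : T) :=
  e \in X \/ exists C, [/\ is_circuit M C, e \in C & C `\ e `<=` X].

Definition spanning M X :=
  X `<=` mground M /\ forall e, e \in mground M -> spans M X e.

Definition mrestrict M X : matroid T :=
  Matroid X (fun I => mindep M I /\ I `<=` X).
Definition mdelete M X : matroid T := mrestrict M (mground M `\` X).
Definition mdual M : matroid T :=
  Matroid (mground M)
          (fun I => exists B, is_base M B /\ I `<=` mground M `\` B).
Definition mcontract M X : matroid T := mdual (mdelete (mdual M) X).
(* M \ X (+) (X, {emptyset}) *)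
Definition mloops M X : matroid T :=
  Matroid ((mground M `\` X) `|` X)
          (fun I => mindep M I /\ I `<=` mground M `\` X).

End Matroids.

Section Families.
Variables (T K : Type).
Implicit Types (N : K -> matroid T) (Y X : set T).

Definition is_covering N Y (R : K -> set T) :=
  (forall i, mindep (N i) (R i)) /\ \bigcup_i R i = Y.

Definition is_packing N (P : K -> set T) :=
  (forall i j, i <> j -> P i `&` P j = set0) /\
  (forall i, spanning (N i) (P i)).

Definition tight_family N Y :=
  (exists R, is_covering N Y R) /\
  (forall R, is_covering N Y R -> forall i, spanning (N i) (R i)).

Definition tight_set N Y X :=
  X `<=` Y /\ tight_family (fun i => mrestrict (N i) X) X.

(* A family F = (<I_i, S_i> : i in K) is given by two maps FI, FS. *)
Definition is_family (M : K -> matroid T) E (FI FS : K -> set T) :=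
  [/\ (forall i, FI i `<=` FS i /\ FS i `<=` E),
      (forall i, mindep (M i) (FI i)),
      (forall i, spanning (M i) (FS i)),
      (forall i j, i <> j -> FI i `&` FI j = set0) &
      \bigcup_i FS i = E].

Definition covering_feasible (M : K -> matroid T) E (FI FS : K -> set T) :=
  exists R, is_covering M E R /\ forall i, FI i `<=` R i /\ R i `<=` FS i.

Definition packing_feasible (M : K -> matroid T) (FI FS : K -> set T) :=
  exists P, is_packing M P /\ forall i, FI i `<=` P i /\ P i `<=` FS i.

Definition feasible (M : K -> matroid T) E FI FS :=
  covering_feasible M E FI FS /\ packing_feasible M FI FS.

Definition is_extension (FI FS FI' FS' : K -> set T) :=
  forall i, [/\ FI i `<=` FI' i, FI' i `<=` FS' i & FS' i `<=` FS i].

(* M_i(F): contract I_i, delete the other I_j, declare the remaining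
   elements outside S_i to be loops.  Ground set: E \ U_j I_j. *)
Definition minorF (M : K -> matroid T) (FI FS : K -> set T) (i : K) :
    matroid T :=
  let N := mdelete (mcontract (M i) (FI i))
                   (\bigcup_(j in [set j | j <> i]) FI j) in
  mloops N (mground N `\` FS i).

End Families.

(* Everything is reduced to the matroids M_i: W is independent in M_i(F) iff
   W avoids all I_j, lies in S_i and W ∪ I_i is independent in M_i, and then
   W spans an element e of S_i in M_i(F) iff W ∪ I_i spans e in M_i.  As X is
   tight, for every covering (C_j) of M(F)|X the set I_i ∪ C_i spans X ∩ S_i;
   in particular I_i ∪ R_i does, so by an exchange argument I_i ∪ R_i may take
   the place of I_i ∪ C_i in any independent set containing it.  This carries
   coverings and packings of F over to F', and splits every covering of
   M(F)|(X ∪ Y), for Y tight in M(F'), into coverings of the tight sets X and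
   Y; hence X ∪ Y is tight, and maximality of X together with Y ∩ X = ∅
   forces Y = ∅.  For infinite matroids, augmentation inside arbitrary sets,
   fundamental circuits and transitivity of spans all come from the
   base-augmentation axiom. *)

From mathcomp Require Import all_boot.
From mathcomp Require Import boolp classical_sets.
Set Implicit Arguments. Unset Strict Implicit. Unset Printing Implicit Defensive.
Local Open Scope classical_set_scope.

Lemma proper_witness (T : Type) (A B : set T) :
  A `<=` B -> A <> B -> exists2 x, B x & ~ A x.
Proof.
move=> sAB nAB; apply: contrapT => hn; apply: nAB; rewrite eqEsubset; split=> // x Bx.
by apply: contrapT => nAx; apply: hn; exists x.
Qed.

Section IndependenceSystem.
Variables (T : Type) (N : matroid T).
Hypothesis N_ground : forall I, mindep N I -> I `<=` mground N.
Hypothesis N_subset : forall I J, I `<=` J -> mindep N J -> mindep N I.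

Lemma spansS A A' e : A `<=` A' -> spans N A e -> spans N A' e.
Proof.
move=> sAA' [|[C [cC eC sC]]].
  by rewrite !in_setE => /sAA' Ae; left; rewrite in_setE.
by right; exists C; split=> // x /sC /sAA'.
Qed.

Lemma spans_ground A e : A `<=` mground N -> spans N A e -> mground N e.
Proof.
move=> sA [|[C [[sC _ _] eC _]]]; first by rewrite in_setE => /sA.
by rewrite in_setE in eC; apply: sC.
Qed.

Lemma spans_dep A e : ~ A e -> spans N A e -> ~ mindep N (e |` A).
Proof.
move=> nAe [|[C [[_ nC _] eC sC]]]; first by rewrite in_setE.
move=> ieA; apply/nC/(N_subset _ ieA) => x Cx.
have [->|xe] := pselect (x = e); first by left.
by right; apply: sC; split.
Qed.

Definition fcircuit A e := e |` [set a | A a /\ mindep N (e |` (A `\ a))].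

Lemma fcircuit_circuit A e : mindep N A -> mground N e ->
  ~ mindep N (fcircuit A e) -> is_circuit N (fcircuit A e).
Proof.
move=> iA Ee nC; split=> //.
  by move=> x [-> //|[Ax _]]; apply: N_ground iA x Ax.
move=> D sD nD; have [c Cc nDc] := proper_witness sD nD.
case: Cc => [ce|[_ iAc]].
  apply: N_subset iA => x Dx; case: (sD x Dx) => [xe|[] //].
  by rewrite xe -ce in Dx.
apply: N_subset iAc => x Dx; case: (sD x Dx) => [->|[Ax _]]; first by left.
by right; split=> // xc; rewrite xc in Dx.
Qed.

Lemma fcircuit_spans A e : mindep N A -> mground N e ->
  ~ mindep N (fcircuit A e) -> spans N A e.
Proof.
move=> iA Ee nC; right; exists (fcircuit A e); split.
- exact: fcircuit_circuit.
- by rewrite in_setE; left.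
- by move=> x [[xe|[Ax _]] nxe]; [case: nxe|].
Qed.

End IndependenceSystem.

Section Matroid.
Variables (T : Type) (M : matroid T).
Hypothesis hM : is_matroid M.

Lemma indep_ground I : mindep M I -> I `<=` mground M.
Proof. by case: hM => h _ _ _ _; apply: h. Qed.

Lemma indep0 : mindep M set0.
Proof. by case: hM. Qed.

Lemma indepS I J : I `<=` J -> mindep M J -> mindep M I.
Proof. by case: hM => _ _ h _ _ sIJ /h; apply. Qed.

Lemma base_augment I B : mindep M I -> ~ is_base M I -> is_base M B ->
  exists x, [/\ B x, ~ I x & mindep M (x |` I)].
Proof.
case: hM => _ _ _ h _ iI nbI bB; have [x + ixI] := h I B iI nbI bB.
by rewrite in_setE => -[Bx nIx]; exists x.
Qed.

Lemma maxindep_extend X I : X `<=` mground M -> mindep M I -> I `<=` X ->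
  exists2 B, I `<=` B & maxindep_in M X B.
Proof. by case: hM => _ _ _ _ h sX iI sIX; have [B []] := h X I sX iI sIX; exists B. Qed.

Lemma maxindep_mem X B y : maxindep_in M X B -> X y -> mindep M (y |` B) -> B y.
Proof.
case=> sBX _ mB Xy iyB; suff e : y |` B = B by rewrite -e; left.
by apply: mB => // x [->|/sBX].
Qed.

Lemma maxindepN_augment X I : mindep M I -> I `<=` X -> ~ maxindep_in M X I ->
  exists z, [/\ X z, ~ I z & mindep M (z |` I)].
Proof.
move=> iI sIX nmI; apply: contrapT => hn; apply: nmI; split=> // B iB sIB sBX.
apply: contrapT => nBI; have [z Bz nIz] := proper_witness sIB (nesym nBI).
by apply: hn; exists z; split; [exact: sBX|by []|apply: indepS iB => x [->|/sIB]].
Qed.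

Lemma base_indep_eq B J : is_base M B -> mindep M J -> B `<=` J -> J = B.
Proof. by move=> [_ _ mB] iJ sBJ; apply: mB => //; apply: indep_ground. Qed.

Lemma maxindep_base X B J : is_base M B -> B `<=` X -> maxindep_in M X J ->
  is_base M J.
Proof.
move=> bB sBX mJ; have [_ iJ _] := mJ; apply: contrapT => nbJ.
have [x [Bx nJx ixJ]] := base_augment iJ nbJ bB.
by apply/nJx/(maxindep_mem mJ (sBX x Bx)).
Qed.

Lemma maxindep_base_setD Z B BB J : maxindep_in M Z B -> B `<=` BB ->
  is_base M BB -> is_base M J -> J `\` Z `<=` BB -> BB `\` Z `<=` J.
Proof.
move=> mB sBBB bBB bJ sJBB; have [sBZ _ _] := mB; have [_ iBB _] := bBB.
set L := B `|` (J `\` Z).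
have sLBB : L `<=` BB by move=> x [/sBBB|/sJBB].
have bL : is_base M L.
  apply: contrapT => nbL.
  have [y [Jy nLy iyL]] := base_augment (indepS sLBB iBB) nbL bJ.
  have Zy : Z y by apply: contrapT => nZy; apply: nLy; right.
  by apply/nLy; left; apply: maxindep_mem mB Zy (indepS _ iyL) => x [->|Bx];
    [left|right; left].
by rewrite (base_indep_eq bL iBB sLBB) => x [[/sBZ //|[]]].
Qed.

Lemma maxindep_augment Z B I : Z `<=` mground M -> maxindep_in M Z B ->
  mindep M I -> I `<=` Z -> ~ maxindep_in M Z I ->
  exists x, [/\ B x, ~ I x & mindep M (x |` I)].
Proof.
move=> sZ mB iI sIZ nmI; apply: contrapT => noaug.
have {}noaug x : B x -> ~ I x -> ~ mindep M (x |` I).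
  by move=> Bx nIx ixI; apply: noaug; exists x.
have [z [Zz nIz izI]] := maxindepN_augment iI sIZ nmI.
have [sBZ iB _] := mB.
have [BB sBBB bBB] := maxindep_extend (@subset_refl _ _) iB (subset_trans sBZ sZ).
have [_ iBB _] := bBB.
(* A base grown from [A] inside [A `|` BB] meets [Z] only inside [A], since
   [BB `&` Z] lies in [B], none of whose elements outside [I] fits next to [I]. *)
have grow A : I `<=` A -> A `<=` Z -> mindep M A ->
    exists J, [/\ A `<=` J, is_base M J, J `\` Z `<=` BB & J `&` Z `<=` A].
  move=> sIA sAZ iA.
  have sABB : A `|` BB `<=` mground M.
    by move=> x [/(indep_ground iA)|/(indep_ground iBB)].
  have [J sAJ mJ] := maxindep_extend sABB iA (@subsetUl _ A BB).
  have [sJ iJ _] := mJ.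
  exists J; split=> //.
  - exact: maxindep_base bBB (@subsetUr _ A BB) mJ.
  - by move=> x [/sJ [/sAZ|]].
  - move=> y [Jy Zy]; apply: contrapT => nAy.
    have BBy : BB y by case: (sJ y Jy).
    have By : B y by apply: maxindep_mem mB Zy (indepS _ iBB) => x [->|/sBBB].
    apply: (noaug y By (fun Iy => nAy (sIA y Iy))).
    by apply: indepS iJ => x [->|/sIA/sAJ].
have sIzZ : z |` I `<=` Z by move=> x [->|/sIZ].
have [J [sIzJ bJ sJBB sJZ]] := grow (z |` I) (@subsetUr _ _ _) sIzZ izI.
have [K [_ bK sKBB sKZ]] := grow I (@subset_refl _ _) sIZ iI.
have sKJ : K `<=` J.
  move=> y Ky; have [Zy|nZy] := pselect (Z y); first by apply: sIzJ; right; apply: sKZ.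
  exact: (maxindep_base_setD mB sBBB bBB bJ sJBB) (conj (sKBB y (conj Ky nZy)) nZy).
have [_ iJ _] := bJ.
by apply/nIz/sKZ; split=> //; rewrite -(base_indep_eq bK iJ sKJ); apply: sIzJ; left.
Qed.

Lemma fcircuit_dep A e : mindep M A -> ~ mindep M (e |` A) ->
  ~ mindep M (fcircuit M A e).
Proof.
move=> iA neA iC.
have sCeA : fcircuit M A e `<=` e |` A by move=> x [->|[Ax _]]; [left|right].
have sZ : e |` A `<=` mground M.
  by move=> x [->|/(indep_ground iA) //]; apply: indep_ground iC _ (or_introl erefl).
have [B sCB mB] := maxindep_extend sZ iC sCeA.
have [sBZ iB _] := mB.
have nBZ : B <> e |` A by move=> eAB; apply: neA; rewrite -eAB.
have [a eAa nBa] := proper_witness sBZ nBZ.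
have Aa : A a by case: eAa => // ae; exfalso; apply: nBa; rewrite ae; apply: sCB; left.
have nmAa : ~ maxindep_in M (e |` A) (A `\ a).
  case=> _ _ /(_ A iA (@subDsetl _ _ _) (@subsetUr _ _ _)) AAa.
  by have [_ /(_ erefl)] : (A `\ a) a by rewrite -AAa.
have sAaZ : A `\ a `<=` e |` A := subset_trans (@subDsetl _ _ _) (@subsetUr _ _ _).
have [x [Bx nAax ixAa]] :=
  maxindep_augment sZ mB (indepS (@subDsetl _ _ _) iA) sAaZ nmAa.
case: (sBZ x Bx) => [xe|Ax].
  by apply: nBa; apply: sCB; right; split=> //; rewrite -xe.
by apply: nAax; split=> // xa; apply: nBa; rewrite -xa.
Qed.

Lemma dep_spans A e : mindep M A -> mground M e -> ~ mindep M (e |` A) -> spans M A e.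
Proof.
move=> iA Ee neA.
exact: fcircuit_spans (@indep_ground) (@indepS) _ _ iA Ee (fcircuit_dep iA neA).
Qed.

Lemma maxindep_setU1_indep Y B B0 e : Y `<=` mground M ->
  maxindep_in M Y B -> maxindep_in M Y B0 -> ~ Y e ->
  mindep M (e |` B) -> mindep M (e |` B0).
Proof.
move=> sY mB mB0 nYe ieB; apply: contrapT => neB0.
have [sBY iB _] := mB; have [sB0Y iB0 _] := mB0.
have seYE : e |` Y `<=` mground M.
  by move=> x [->|/sY //]; apply: indep_ground ieB _ (or_introl erefl).
have mB0e : maxindep_in M (e |` Y) B0.
  split=> //; first by move=> x /sB0Y; right.
  move=> B' iB' sB0B' sB'eY; rewrite eqEsubset; split=> // y B'y.
  have iyB0 : mindep M (y |` B0) by apply: indepS iB' => x [->|/sB0B'].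
  case: (sB'eY y B'y) => [ye|Yy]; last exact: maxindep_mem mB0 Yy iyB0.
  by rewrite ye in iyB0.
have nmB : ~ maxindep_in M (e |` Y) B.
  have seBeY : e |` B `<=` e |` Y by move=> x [->|/sBY]; [left|right].
  case=> _ _ /(_ _ ieB (@subsetUr _ _ _) seBeY) eB.
  by apply: nYe; apply: sBY; rewrite -eB; left.
have [x [B0x nBx ixB]] :=
  maxindep_augment seYE mB0e iB (subset_trans sBY (@subsetUr _ _ _)) nmB.
exact/nBx/(maxindep_mem mB (sB0Y x B0x) ixB).
Qed.

Lemma maxindep_spans_dep Y B e : Y `<=` mground M -> maxindep_in M Y B ->
  ~ Y e -> spans M Y e -> ~ mindep M (e |` B).
Proof.
move=> sY mB nYe [|[C [[_ nC mC] eC sCY]]]; first by rewrite in_setE.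
rewrite in_setE in eC.
have iCe : mindep M (C `\ e).
  apply: mC; first exact: subDsetl.
  by move=> Ce; have [_ /(_ erefl)] : (C `\ e) e by rewrite Ce.
have [B1 sCB1 mB1] := maxindep_extend sY iCe sCY.
move=> /(maxindep_setU1_indep sY mB mB1 nYe) ieB1; apply/nC/(indepS _ ieB1) => x Cx.
by have [->|xe] := pselect (x = e); [left|right; apply: sCB1].
Qed.

Lemma spans_trans A Z e : A `<=` mground M ->
  (forall z, Z z -> spans M A z) -> spans M Z e -> spans M A e.
Proof.
move=> sA spAZ spZe.
have [Ae|nAe] := pselect (A e); first by left; rewrite in_setE.
have [Ze|nZe] := pselect (Z e); first exact: spAZ.
have sAZ : A `|` Z `<=` mground M.
  by move=> x [/sA //|/spAZ]; apply: spans_ground.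
have [B _ mB] := maxindep_extend sA indep0 (@sub0set _ A).
have [sBA iB _] := mB.
have mBAZ : maxindep_in M (A `|` Z) B.
  split=> //; first exact: subset_trans sBA (@subsetUl _ _ _).
  move=> B' iB' sBB' sB'AZ; rewrite eqEsubset; split=> // y B'y.
  have iyB : mindep M (y |` B) by apply: indepS iB' => x [->|/sBB'].
  have [Ay|nAy] := pselect (A y); first exact: maxindep_mem mB Ay iyB.
  case: (sB'AZ y B'y) => // Zy.
  by case: (maxindep_spans_dep sA mB nAy (spAZ y Zy)).
have nAZe : ~ (A `|` Z) e by case.
have spAZe : spans M (A `|` Z) e := spansS (@subsetUr _ _ _) spZe.
apply: spansS sBA (dep_spans iB _ (maxindep_spans_dep sAZ mBAZ nAZe spAZe)).
exact: spans_ground spAZe.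
Qed.

Lemma indep_exchange P P' Z : mindep M P -> mindep M (P' `|` Z) ->
  (forall p, P p -> spans M P' p) -> Z `&` P' `<=` P -> mindep M (P `|` Z).
Proof.
move=> iP iP'Z spP'P sZP'P.
have sPZ : P `|` Z `<=` mground M.
  by move=> x [/(indep_ground iP) //|Zx]; apply: indep_ground iP'Z _ (or_intror Zx).
have [B sPB mB] := maxindep_extend sPZ iP (@subsetUl _ _ _).
have [sBPZ iB _] := mB.
suff sZB : Z `<=` B by apply: indepS iB => x [/sPB|/sZB].
move=> z Zz; apply: contrapT => nBz.
have spBz : spans M B z.
  apply: dep_spans iB (sPZ z (or_intror Zz)) _ => izB.
  exact/nBz/(maxindep_mem mB (or_intror Zz) izB).
(* [P' `|` (B `&` Z)] spans all of [B], hence [z], yet it stays independent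
   when [z] is added. *)
set A := P' `|` (B `&` Z).
have sAP'Z : A `<=` P' `|` Z by move=> x [P'x|[_ Zx]]; [left|right].
have spAz : spans M A z.
  apply: spans_trans (subset_trans sAP'Z (indep_ground iP'Z)) _ spBz => b Bb.
  case: (sBPZ b Bb) => [Pb|Zb]; first exact: spansS (@subsetUl _ _ _) (spP'P b Pb).
  by left; rewrite in_setE; right.
have nAz : ~ A z by case=> [P'z|[]//]; apply/nBz/sPB/sZP'P.
apply: (spans_dep (@indepS) nAz spAz).
by apply: indepS iP'Z => x [->|/sAP'Z //]; right.
Qed.

Lemma base_dual_delete X D : mindep M X ->
  is_base (mdelete (mdual M) X) D <->
  exists2 B, X `<=` B /\ is_base M B & D = (mground M `\` X) `\` B.
Proof.
move=> iX.
have dual_indep B : is_base M B ->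
    mindep (mdelete (mdual M) X) ((mground M `\` X) `\` B).
  by move=> bB; split; [exists B; split=> // x [[Ex _] nBx]|exact: subDsetl].
split.
- case=> sD [[B0 [bB0 sDB0]] _] mD.
  have mD' B : is_base M B -> D `<=` (mground M `\` X) `\` B ->
      (mground M `\` X) `\` B = D.
    by move=> bB sDB; apply: mD => //; exact: dual_indep.
  have eD0 : (mground M `\` X) `\` B0 = D.
    by apply: mD' => // x Dx; split; [exact: sD|case: (sDB0 x Dx)].
  have [sB0E _ _] := bB0.
  have sXB0 : X `|` B0 `<=` mground M by move=> x [/(indep_ground iX)|/sB0E].
  have [B sXB mB] := maxindep_extend sXB0 iX (@subsetUl _ _ _).
  have [sBXB0 _ _] := mB.
  exists B; first by split=> //; apply: maxindep_base bB0 (@subsetUr _ _ _) mB.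
  apply/esym/mD'; first exact: maxindep_base bB0 (@subsetUr _ _ _) mB.
  by rewrite -eD0 => x [[Ex nXx] nB0x]; split=> // /sBXB0 [].
- case=> B [sXB bB] ->; have [_ iB _] := bB.
  split; [exact: subDsetl|exact: dual_indep|].
  move=> D' [[B' [bB' sD'B']] sD'EX] sDD' _; rewrite eqEsubset; split=> // d D'd.
  have [Ed nXd] := sD'EX d D'd; split=> // Bd.
  have [sB'E _ _] := bB'.
  set S := X `|` (B' `\` X).
  have sSB : S `<=` B.
    move=> y [/sXB //|[B'y nXy]]; apply: contrapT => nBy.
    by have [] := sD'B' y (sDD' y (conj (conj (sB'E y B'y) nXy) nBy)).
  have nbS : ~ is_base M S.
    move=> bS; rewrite (base_indep_eq bS iB sSB) in Bd.
    by case: Bd => // -[B'd _]; have [] := sD'B' d D'd.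
  have [y [B'y nSy _]] := base_augment (indepS sSB iB) nbS bB'.
  by apply: nSy; have [Xy|nXy] := pselect (X y); [left|right].
Qed.

Lemma indep_contract X I : mindep M X ->
  mindep (mcontract M X) I <-> I `<=` mground M `\` X /\ mindep M (I `|` X).
Proof.
move=> iX; split.
- case=> D [/(base_dual_delete _ iX) [B [sXB bB] ->] sI].
  split=> [x /sI [] //|]; have [_ iB _] := bB.
  apply: indepS iB => x [Ix|/sXB //].
  by have [[Ex nXx] nDx] := sI x Ix; apply: contrapT => nBx; apply: nDx.
- case=> sI iIX.
  have [B sIXB bB] := maxindep_extend (@subset_refl _ _) iIX (indep_ground iIX).
  exists ((mground M `\` X) `\` B); split.
    by apply/base_dual_delete => //; exists B => //; split=> // x Xx; apply: sIXB; right.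
  move=> x Ix; split; first exact: sI.
  by case=> _; apply; apply: sIXB; left.
Qed.

End Matroid.

Section ContractionSpans.
Variables (T : Type) (M N : matroid T) (F G : set T).
Hypothesis hM : is_matroid M.
Hypothesis indepN : forall S, mindep N S <-> S `<=` G /\ mindep M (S `|` F).
Hypothesis sGN : G `<=` mground N.
Hypothesis sGM : G `<=` mground M.
Hypothesis disjGF : forall x, G x -> ~ F x.

Lemma indepN_subset I J : I `<=` J -> mindep N J -> mindep N I.
Proof.
move=> sIJ /indepN [sJG iJF]; apply/indepN; split; first exact: subset_trans sIJ sJG.
exact: (indepS hM (setSU sIJ) iJF).
Qed.

Lemma indepN_ground I : mindep N I -> I `<=` mground N.
Proof. by move=> /indepN [sIG _]; apply: subset_trans sIG sGN. Qed.

Lemma spans_contraction W e : mindep N W -> G e ->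
  spans N W e <-> spans M (F `|` W) e.
Proof.
move=> iW Ge; have [sWG iWF] := iffLR (indepN W) iW.
have iFW : mindep M (F `|` W) by apply: (indepS hM _ iWF) => x [|]; [right|left].
have [We|nWe] := pselect (W e).
  by split=> _; left; rewrite in_setE //; right.
have nFWe : ~ (F `|` W) e by case=> [/(disjGF Ge)|].
split=> [spN|spM].
- apply: (dep_spans hM iFW (sGM Ge)) => ieFW.
  apply: (spans_dep indepN_subset nWe spN); apply/indepN; split.
    by move=> x [->|/sWG].
  by apply: (indepS hM _ ieFW) => x [[->|Wx]|Fx]; [left|right; right|right; left].
- apply: (fcircuit_spans indepN_ground indepN_subset iW (sGN Ge)) => /indepN [sCG iCF].
  apply: (fcircuit_dep hM iFW (spans_dep (indepS hM) nFWe spM)).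
  apply: (indepS hM _ iCF) => x [->|[FWx ieFWx]]; first by left; left.
  have [Fx|nFx] := pselect (F x); first by right.
  have Wx : W x by case: FWx.
  left; right; split=> //; apply/indepN; split; first by move=> y [->|[/sWG]].
  apply: (indepS hM _ ieFWx) => y [[->|[Wy nyx]]|Fy]; first by left.
    by right; split=> //; right.
  by right; split; [left|move=> yx; apply: nFx; rewrite -yx].
Qed.

End ContractionSpans.

Section MinorF.
Variables (T K : Type) (E : set T) (M : K -> matroid T) (FI FS : K -> set T).
Hypothesis M_matroid : forall i, is_matroid (M i).
Hypothesis M_ground : forall i, mground (M i) = E.
Hypothesis FI_indep : forall i, mindep (M i) (FI i).

Local Notation EF := (E `\` \bigcup_j FI j).

Lemma indep_minorF i I : mindep (minorF M FI FS i) I <->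
  [/\ I `<=` EF, I `<=` FS i & mindep (M i) (I `|` FI i)].
Proof.
rewrite /minorF /mloops /mdelete /mrestrict; cbn [mindep mground].
rewrite indep_contract // M_ground.
have -> : mground (mcontract (M i) (FI i)) = E `\` FI i by rewrite -(M_ground i).
split.
- case=> -[[sI iIF] sIG] sIS; split=> // x Ix.
  + have [[Ex nFix] nFjx] := sIG x Ix; split=> // -[j _ Fjx].
    have [ji|nji] := pselect (j = i); first by apply: nFix; rewrite -ji.
    by apply: nFjx; exists j.
  + have [_ nGx] := sIS x Ix; apply: contrapT => nSx; exact: nGx (conj (sIG x Ix) nSx).
- case=> sI sIS iIF.
  have sIG : I `<=` (E `\` FI i) `\` \bigcup_(j in [set j | j <> i]) FI j.
    move=> x /sI [Ex nFx]; split; first by split=> // Fix; apply: nFx; exists i.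
    by case=> j _ Fjx; apply: nFx; exists j.
  split; first by split=> //; split=> // x /sIG [].
  by move=> x Ix; split; [exact: sIG|case=> _; apply; exact: sIS].
Qed.

Lemma indep_minorF_restrict i Y W :
  mindep (mrestrict (minorF M FI FS i) Y) W <->
  [/\ W `<=` Y, W `<=` EF, W `<=` FS i & mindep (M i) (W `|` FI i)].
Proof.
rewrite /mrestrict; cbn [mindep]; rewrite indep_minorF.
by split=> [[[? ? ?] ?]|[? ? ? ?]].
Qed.

Lemma indep_minorF_restrictS i Y W W' : W' `<=` W ->
  mindep (mrestrict (minorF M FI FS i) Y) W ->
  mindep (mrestrict (minorF M FI FS i) Y) W'.
Proof.
move=> sW /indep_minorF_restrict [sWY sWEF sWF iWF]; apply/indep_minorF_restrict.
split; [exact: subset_trans sW sWY|exact: subset_trans sW sWEF|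
        exact: subset_trans sW sWF|exact: (indepS (M_matroid i) (setSU sW) iWF)].
Qed.

Lemma spanning_minorF_restrict i Y W : Y `<=` EF ->
  mindep (mrestrict (minorF M FI FS i) Y) W ->
  spanning (mrestrict (minorF M FI FS i) Y) W <->
  forall e, Y e -> FS i e -> spans (M i) (FI i `|` W) e.
Proof.
move=> sYEF iW; set N := mrestrict (minorF M FI FS i) Y.
have indepN S : mindep N S <-> S `<=` Y `&` FS i /\ mindep (M i) (S `|` FI i).
  rewrite indep_minorF_restrict; split=> [[sSY _ sSF iS]|[sS iS]].
    by split=> // x Sx; split; [exact: sSY|exact: sSF].
  by split=> // x /sS [] // Yx _; apply: sYEF.
have sYFE : Y `&` FS i `<=` mground (M i) by rewrite M_ground => x [/sYEF []].
have disjYF x : (Y `&` FS i) x -> ~ FI i x.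
  by move=> [/sYEF [_ nFx] _] Fx; apply: nFx; exists i.
have spansE e : (Y `&` FS i) e -> spans N W e <-> spans (M i) (FI i `|` W) e.
  exact: (spans_contraction (M_matroid i) indepN (@subIsetl _ _ _) sYFE disjYF iW).
have [sWY _ _ _] := iffLR (indep_minorF_restrict i Y W) iW.
split=> [[_ spW] e Ye Se|spM].
  by apply/spansE; [split|apply: spW; rewrite in_setE].
split=> // e; rewrite in_setE => Ye.
have [Se|nSe] := pselect (FS i e); first by apply/spansE; [split|apply: spM].
(* outside [FS i], [e] is a loop of [N] *)
right; exists [set e]; split; [split| |].
- by move=> x ->.
- by case/indepN => /(_ e erefl) [_ /nSe].
- move=> D sD nD; suff -> : D = set0.
    by apply/indepN; split=> //; rewrite set0U; exact: FI_indep.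
  rewrite -subset0 => x Dx; apply: nD; rewrite eqEsubset; split=> // y ->.
  by rewrite -(sD x Dx).
- by rewrite in_setE.
- by move=> x [].
Qed.

Lemma tight_covering_spans X C :
  tight_set (minorF M FI FS) EF X ->
  is_covering (fun i => mrestrict (minorF M FI FS i) X) X C ->
  forall i e, X e -> FS i e -> spans (M i) (FI i `|` C i) e.
Proof.
move=> [sXEF [_ tX]] cC i; have [iC _] := cC.
exact/(spanning_minorF_restrict sXEF (iC i))/tX.
Qed.

Lemma tight_covering_exchange X C i P Z :
  tight_set (minorF M FI FS) EF X ->
  is_covering (fun i => mrestrict (minorF M FI FS i) X) X C ->
  mindep (M i) (FI i `|` P) -> P `<=` X `&` FS i ->
  mindep (M i) ((FI i `|` C i) `|` Z) -> Z `&` (FI i `|` C i) `<=` FI i `|` P ->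
  mindep (M i) ((FI i `|` P) `|` Z).
Proof.
move=> tX cC iFP sPXF iFCZ sZFCFP.
apply: (indep_exchange (M_matroid i) iFP iFCZ) => // p [Fp|/sPXF [Xp Sp]].
  by left; rewrite in_setE; left.
exact: tight_covering_spans tX cC i p Xp Sp.
Qed.

End MinorF.

Section Extension.
Variables (T K : Type) (E : set T) (M : K -> matroid T) (FI FS : K -> set T).
Variables (X : set T) (R : K -> set T).
Hypothesis M_matroid : forall i, is_matroid (M i).
Hypothesis M_ground : forall i, mground (M i) = E.
Hypothesis hF : is_family M E FI FS.
Hypothesis tX : tight_set (minorF M FI FS) (E `\` \bigcup_j FI j) X.
Hypothesis cR : is_covering (fun i => mrestrict (minorF M FI FS i) X) X R.

Local Notation FI' := (fun i => FI i `|` R i).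

Let FI_indep i : mindep (M i) (FI i). Proof. by case: hF. Qed.

Local Notation indepF := (indep_minorF_restrict FS M_matroid M_ground FI_indep).

Let FI_sub_FS i : FI i `<=` FS i. Proof. by case: hF => /(_ i) []. Qed.
Let FS_sub_E i : FS i `<=` E. Proof. by case: hF => /(_ i) []. Qed.
Let X_sub_EF : X `<=` E `\` \bigcup_j FI j. Proof. by case: tX. Qed.
Let X_notin_FI j x : X x -> ~ FI j x.
Proof. by move=> /X_sub_EF [_ nFx] Fjx; apply: nFx; exists j. Qed.
Let R_minor i : [/\ R i `<=` X, R i `<=` E `\` \bigcup_j FI j, R i `<=` FS i
  & mindep (M i) (R i `|` FI i)].
Proof. exact/indepF/(proj1 cR i). Qed.
Let R_sub_X i : R i `<=` X. Proof. by case: (R_minor i). Qed.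
Let R_sub_FS i : R i `<=` FS i. Proof. by case: (R_minor i). Qed.

Lemma extension_indep i : mindep (M i) (FI i `|` R i).
Proof. by have [_ _ _] := R_minor i; rewrite setUC. Qed.

Lemma extension_spans i e : X e -> FS i e -> spans (M i) (FI i `|` R i) e.
Proof. exact: (tight_covering_spans M_matroid M_ground FI_indep tX cR). Qed.

Lemma X_sub_bigcup_extension : X `<=` \bigcup_j (FI j `|` R j).
Proof. by rewrite -(proj2 cR) => x [j _ Rjx]; exists j => //; right. Qed.

(* Removing [e] from [R j] still leaves a covering of the tight set [X], so
   the rest of [R j] spans [e], although [R j] is independent. *)
Lemma covering_disjoint i j : i <> j -> R i `&` R j = set0.
Proof.
move=> nij; rewrite -subset0 => e [Rie Rje].
set R' := fun k => R k `\` [set x | k = j /\ x = e].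
have cR' : is_covering (fun k => mrestrict (minorF M FI FS k) X) X R'.
  split=> [k|].
    exact: (indep_minorF_restrictS M_matroid M_ground FI_indep (@subDsetl _ _ _)
      (proj1 cR k)).
  rewrite eqEsubset; split=> [x [k _ [/R_sub_X //]]|x].
  rewrite -(proj2 cR) => -[k _ Rkx].
  have [[kj xe]|nkjxe] := pselect (k = j /\ x = e); last by exists k.
  by exists i => //; split; [rewrite xe|case].
have spe := tight_covering_spans M_matroid M_ground FI_indep tX cR' (R_sub_X Rje)
  (R_sub_FS Rje).
have nFR'e : ~ (FI j `|` R' j) e.
  by case=> [/(X_notin_FI (R_sub_X Rje))|[_ /(_ (conj erefl erefl))]].
apply: (spans_dep (indepS (M_matroid j)) nFR'e spe).
apply: (indepS (M_matroid j) _ (extension_indep j)).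
by move=> x [->|[Fx|[Rx _]]]; [right|left|right].
Qed.

Lemma extension_family : is_family M E FI' FS.
Proof.
case: hF => sFS _ spS disjF uS; split=> // [i|i|i j nij].
- by split; [move=> x [/FI_sub_FS|/R_sub_FS]|case: (sFS i)].
- exact: extension_indep.
- rewrite -subset0 => x [[Fix|Rix] [Fjx|Rjx]].
  + by rewrite -(disjF i j nij); split.
  + exact: X_notin_FI (R_sub_X Rjx) Fix.
  + exact: X_notin_FI (R_sub_X Rix) Fjx.
  + by rewrite -(covering_disjoint nij); split.
Qed.

Lemma extension_is_extension : is_extension FI FS FI' FS.
Proof. by move=> i; split=> // x [/FI_sub_FS|/R_sub_FS]. Qed.

Lemma extension_covering_feasible :
  covering_feasible M E FI FS -> covering_feasible M E FI' FS.
Proof.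
case=> R0 [[iR0 uR0] sR0].
have sR0FS k : R0 k `<=` FS k by case: (sR0 k).
set Q := fun k => R0 k `&` X.
have cQ : is_covering (fun k => mrestrict (minorF M FI FS k) X) X Q.
  split=> [k|]; last first.
    by rewrite -setI_bigcupl uR0 setIidr // => x /X_sub_EF [].
  apply/indepF; split; [exact: subIsetr|by move=> x [_ /X_sub_EF]|
    by move=> x [/sR0FS]|].
  by apply: (indepS (M_matroid k) _ (iR0 k)) => x [[]//|/(proj1 (sR0 k))].
exists (fun k => FI' k `|` (R0 k `\` X)); split; first split.
- move=> k.
  apply: (tight_covering_exchange M_matroid M_ground FI_indep tX cQ (extension_indep k)).
  + by move=> x Rx; split; [exact: R_sub_X Rx|exact: R_sub_FS Rx].
  + apply: (indepS (M_matroid k) _ (iR0 k)).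
    by move=> x [[/(proj1 (sR0 k))|[]]|[]].
  + by move=> x [[_ nXx] [Fx|[_ Xx]]]; [left|].
- rewrite eqEsubset; split=> x.
    by case=> k _ [[/FI_sub_FS|/R_sub_FS]|[/sR0FS]] /FS_sub_E.
  have [Xx|nXx] := pselect (X x).
    by move: Xx; rewrite -(proj2 cR) => -[k _ Rkx]; exists k => //; left; right.
  by rewrite -uR0 => -[k _ R0kx]; exists k => //; right.
- by move=> k; split=> [x Fx|x [[/FI_sub_FS|/R_sub_FS]|[/sR0FS]]] //; left.
Qed.

Lemma extension_packing_feasible :
  packing_feasible M FI FS -> packing_feasible M FI' FS.
Proof.
case=> P0 [[dP0 spP0] sP0].
have sP0FS k : P0 k `<=` FS k by case: (sP0 k).
have [_ _ _ disjF' _] := extension_family.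
have FI'_P0 k x : FI' k x -> ~ X x -> P0 k x.
  by move=> [/(proj1 (sP0 k))|/R_sub_X] //.
exists (fun k => FI' k `|` (P0 k `\` X)); split; first split.
- move=> i j nij; rewrite -subset0 => x [xi xj]; have [Xx|nXx] := pselect (X x).
    by rewrite -(disjF' i j nij); split; [case: xi => [|[]]|case: xj => [|[]]].
  rewrite -(dP0 i j nij); split.
    by case: xi => [/FI'_P0|[]]; [apply|].
  by case: xj => [/FI'_P0|[]]; [apply|].
- move=> i; have [sP0E spP0i] := spP0 i.
  have sNE : FI' i `|` (P0 i `\` X) `<=` mground (M i).
    by rewrite M_ground => x [[/FI_sub_FS|/R_sub_FS]|[/sP0FS]] /FS_sub_E.
  split=> // e /spP0i spe; apply: (spans_trans (M_matroid i) sNE _ spe) => z P0z.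
  have [Xz|nXz] := pselect (X z); last by left; rewrite in_setE; right.
  exact: spansS (@subsetUl _ _ _) (extension_spans Xz (sP0FS i z P0z)).
- by move=> k; split=> [x Fx|x [[/FI_sub_FS|/R_sub_FS]|[/sP0FS]]] //; left.
Qed.

Local Notation indepF' := (indep_minorF_restrict FS M_matroid M_ground extension_indep).

Section TightUnion.
Variable Y : set T.
Hypothesis tY : tight_set (minorF M FI' FS) (E `\` \bigcup_j FI' j) Y.

Let Y_sub_EF' : Y `<=` E `\` \bigcup_j FI' j. Proof. by case: tY. Qed.
Let Y_notin_X y : Y y -> ~ X y.
Proof. by move=> /Y_sub_EF' [_ nFy] /X_sub_bigcup_extension. Qed.
Let Y_sub_EF : Y `<=` E `\` \bigcup_j FI j.
Proof.
by move=> y /Y_sub_EF' [Ey nFy]; split=> // -[j _ Fjy]; apply: nFy; exists j => //; left.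
Qed.
Let XY_sub_EF : X `|` Y `<=` E `\` \bigcup_j FI j.
Proof. by move=> x [/X_sub_EF|/Y_sub_EF]. Qed.

Lemma extension_coveringU :
  exists W, is_covering (fun i => mrestrict (minorF M FI FS i) (X `|` Y)) (X `|` Y) W.
Proof.
have [[Q cQ] _] := tY.2.
exists (fun k => R k `|` Q k).
split=> [k|]; last by rewrite bigcupU (proj2 cR) (proj2 cQ).
have [sQY _ sQS iQF] := iffLR (indepF' k Y (Q k)) (proj1 cQ k).
apply/indepF; split.
- by move=> x [/R_sub_X|/sQY]; [left|right].
- by move=> x [/R_sub_X/X_sub_EF|/sQY/Y_sub_EF].
- by move=> x [/R_sub_FS|/sQS].
- apply: (indepS (M_matroid k) _ iQF).
  by move=> x [[Rx|Qx]|Fx]; [right; right|left|right; left].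
Qed.

(* A covering [W] of [X `|` Y] splits into a covering of the tight set [X]
   and, after exchanging its [X]-part for [R], a covering of [Y] in [M(F')]. *)
Lemma extension_coveringU_spanning W :
  is_covering (fun i => mrestrict (minorF M FI FS i) (X `|` Y)) (X `|` Y) W ->
  forall i, spanning (mrestrict (minorF M FI FS i) (X `|` Y)) (W i).
Proof.
move=> cW i.
set Wx := fun k => W k `&` X; set Wy := fun k => W k `&` Y.
have W_minor k := iffLR (indepF k (X `|` Y) (W k)) (proj1 cW k).
have cWx : is_covering (fun k => mrestrict (minorF M FI FS k) X) X Wx.
  split=> [k|]; last by rewrite -setI_bigcupl (proj2 cW) setIidr // => x; left.
  have [_ sWEF sWS iWF] := W_minor k.
  apply/indepF; split; [exact: subIsetr|by move=> x [/sWEF]|by move=> x [/sWS]|].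
  by apply: (indepS (M_matroid k) _ iWF) => x [[Wkx _]|Fx]; [left|right].
have cWy : is_covering (fun k => mrestrict (minorF M FI' FS k) Y) Y Wy.
  split=> [k|]; last by rewrite -setI_bigcupl (proj2 cW) setIidr // => x; right.
  have [_ _ sWS iWF] := W_minor k.
  apply/indepF'; split; [exact: subIsetr|by move=> x [_ /Y_sub_EF']|by move=> x [/sWS]|].
  rewrite setUC.
  apply: (tight_covering_exchange M_matroid M_ground FI_indep tX cWx (extension_indep k)).
  + by move=> x Rx; split; [exact: R_sub_X Rx|exact: R_sub_FS Rx].
  + by apply: (indepS (M_matroid k) _ iWF) => x [[Fx|[Wkx _]]|[Wkx _]]; [right|left|left].
  + by move=> x [[_ Yx] [Fx|[_ /(Y_notin_X Yx)]]]; [left|].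
have spWy := (spanning_minorF_restrict M_matroid M_ground extension_indep Y_sub_EF'
  (proj1 cWy i)).1 (tY.2.2 Wy cWy i).
have [_ _ _ iWF] := W_minor i.
have sFWE : FI i `|` W i `<=` mground (M i).
  by apply: (indep_ground (M_matroid i)); rewrite setUC.
have spFW_X e : X e -> FS i e -> spans (M i) (FI i `|` W i) e.
  move=> Xe Se.
  apply: (spansS _ (tight_covering_spans M_matroid M_ground FI_indep tX cWx Xe Se)).
  by move=> x [Fx|[Wkx _]]; [left|right].
apply/(spanning_minorF_restrict M_matroid M_ground FI_indep XY_sub_EF (proj1 cW i)).
move=> e [Xe|Ye] Se; first exact: spFW_X.
apply: (spans_trans (M_matroid i) sFWE _ (spWy e Ye Se)) => z [[Fz|Rz]|[Wz _]].
- by left; rewrite in_setE; left.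
- exact: spFW_X (R_sub_X Rz) (R_sub_FS Rz).
- by left; rewrite in_setE; right.
Qed.

Lemma extension_tight_setU :
  tight_set (minorF M FI FS) (E `\` \bigcup_j FI j) (X `|` Y).
Proof.
split; first exact: XY_sub_EF.
by split; [exact: extension_coveringU|exact: extension_coveringU_spanning].
Qed.

End TightUnion.

End Extension.

Theorem lemma3p11 (T K : Type) (E : set T) (M : K -> matroid T)
  (FI FS : K -> set T) (X : set T) (R : K -> set T) :
  (forall i, is_matroid (M i) /\ mground (M i) = E) ->
  is_family M E FI FS ->
  feasible M E FI FS ->
  tight_set (minorF M FI FS) (E `\` \bigcup_j FI j) X ->
  is_covering (fun i => mrestrict (minorF M FI FS i) X) X R ->
  let FI' := fun i => FI i `|` R i in
  [/\ is_family M E FI' FS,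
      is_extension FI FS FI' FS,
      feasible M E FI' FS,
      (forall i e, e \in X `&` FS i -> spans (M i) (FI' i) e) &
      ((forall Y, tight_set (minorF M FI FS) (E `\` \bigcup_j FI j) Y ->
          Y `<=` X) ->
       forall Y, tight_set (minorF M FI' FS) (E `\` \bigcup_j FI' j) Y ->
          Y = set0)].
Proof.
move=> hM hF [cF pF] tX cR FI'.
have M_matroid i : is_matroid (M i) by case: (hM i).
have M_ground i : mground (M i) = E by case: (hM i).
split.
- exact: (extension_family M_matroid M_ground hF tX cR).
- exact: (extension_is_extension M_matroid M_ground hF cR).
- split; first exact: (extension_covering_feasible M_matroid M_ground hF tX cR cF).
  exact: (extension_packing_feasible M_matroid M_ground hF tX cR pF).
- move=> i e; rewrite in_setE => -[Xe Se].
  exact: (extension_spans M_matroid M_ground hF tX cR Xe Se).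
- move=> X_max Y tY; rewrite -subset0 => y Yy.
  have XY_tight := extension_tight_setU M_matroid M_ground hF tX cR tY.
  have Xy : X y by apply: (X_max _ XY_tight); right.
  have [/(_ y Yy) [_ nF'y] _] := tY.
  exact/nF'y/(X_sub_bigcup_extension cR Xy).
Qed.
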